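(* Let $K\ge 2$ and let $\mathbf{Q}^\star,\mathbf{Q}_r,\mathbf{z}^\star,\mathbf{z}_r$ be as in the context. Then $$\left|\mathbf{z}^{\star\dagger}\mathbf{Q}^\star\mathbf{z}^\star-\mathbf{z}_r^\dagger\mathbf{Q}^\star\mathbf{z}_r\right|\le 2n\,\|\mathbf{Q}^\star-\mathbf{Q}_r\|_2.$$
   Context: $\mathcal{A}_K=\{\exp(2\pi\mathrm{i}k/K):k=0,\dots,K-1\}$. $\mathbf{Q}^\star\in\mathbb{C}^{n\times n}$ is Hermitian positive semi-definite; $\mathbf{H}\in\mathbb{C}^{n\times n}$ arbitrary; $\mathbf{Q}=\mathbf{Q}^\star+\mathbf{H}$. $\mathbf{Q}_r=\mathbf{V}_r\boldsymbol{\Sigma}_r\mathbf{V}_r^\dagger$ with $\boldsymbol{\Sigma}_r$ the top-$r$ singular values of $\mathbf{Q}$ and $\mathbf{V}_r$ the corresponding left singular vectors. $\mathbf{z}^\star$ attains $\max_{\mathbf{z}\in\mathcal{A}_K^n}\mathbf{z}^\dagger\mathbf{Q}^\star\mathbf{z}$ and $\mathbf{z}_r$ attains $\max_{\mathbf{z}\in\mathcal{A}_K^n}\mathbf{z}^\dagger\mathbf{Q}_r\mathbf{z}$. $\|\cdot\|_2$ is the spectral norm. *)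

From HB Require Import structures.
From mathcomp Require Import all_boot all_order all_algebra.
From mathcomp Require Import all_classical all_reals all_analysis.
From mathcomp Require Import complex.
Set Implicit Arguments. Unset Strict Implicit. Unset Printing Implicit Defensive.
Import Order.TTheory GRing.Theory Num.Theory.
Local Open Scope ring_scope.
Local Open Scope classical_set_scope.

Section Defs.
Variable R : realType.
Local Notation C := R[i].

Definition ctr m n (A : 'M[C]_(m, n)) : 'M[C]_(n, m) := (map_mx Num.conj A)^T.

Definition cmod (x : C) : R := complex.Re `|x|.

Definition vnorm n (x : 'cV[C]_n) : R :=
  Num.sqrt (\sum_(i < n) cmod (x i 0) ^+ 2).

Definition specnorm n (A : 'M[C]_n) : R :=
  sup [set vnorm (A *m x) | x in [set x : 'cV[C]_n | vnorm x = 1]].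

Definition rootsK (K : nat) : set C :=
  [set z | exists2 k : nat, (k < K)%N &
     z = Complex (cos (2 * pi * k%:R / K%:R)) (sin (2 * pi * k%:R / K%:R))].

Definition in_AKn (K n : nat) (z : 'cV[C]_n) : Prop :=
  forall i : 'I_n, rootsK K (z i 0).

Definition qform n (Q : 'M[C]_n) (z : 'cV[C]_n) : C := (ctr z *m Q *m z) 0 0.

Definition is_maximizer (K n : nat) (Q : 'M[C]_n) (z : 'cV[C]_n) : Prop :=
  in_AKn K z /\ forall w, in_AKn K w -> qform Q w <= qform Q z.

Definition hermitian n (A : 'M[C]_n) : Prop := ctr A = A.

Definition psd n (A : 'M[C]_n) : Prop :=
  hermitian A /\ forall x : 'cV[C]_n, 0 <= qform A x.

Definition unitary n (U : 'M[C]_n) : Prop := ctr U *m U = 1%:M.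

Definition is_svd n (Q : 'M[C]_n) (U W : 'M[C]_n) (s : 'rV[R]_n) : Prop :=
  [/\ unitary U, unitary W,
      forall i, 0 <= s 0 i,
      forall i j : 'I_n, (i <= j)%N -> s 0 j <= s 0 i &
      Q = U *m diag_mx (map_mx (fun x => x%:C%C) s) *m ctr W].

(* Q_r = V_r Sigma_r V_r^dagger : V_r = first r columns of U (left singular
   vectors), Sigma_r = diag of the top r singular values. *)
Definition trunc_approx n (r : nat) (U : 'M[C]_n) (s : 'rV[R]_n) : 'M[C]_n :=
  U *m diag_mx (\row_i (if (i < r)%N then (s 0 i)%:C%C else 0)) *m ctr U.

End Defs.

From HB Require Import structures.
From mathcomp Require Import all_boot all_order all_algebra.
From mathcomp Require Import all_classical all_reals all_analysis.
From mathcomp Require Import complex.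
From mathcomp Require Import ring.
Set Implicit Arguments. Unset Strict Implicit.
Import Order.TTheory GRing.Theory Num.Theory.
Local Open Scope ring_scope.

(* Every z in A_K^n has unimodular entries, so with D := Q* - Q_r,
     |z† D z| <= sum_i |(D z)_i| <= sqrt n ||D z|| <= sqrt n ||D|| ||z|| = n ||D||.
   Since z* maximizes Q* and z_r maximizes Q_r on A_K^n,
     0 <= z*† Q* z* - z_r† Q* z_r <= z*† D z* - z_r† D z_r <= 2 n ||D||.  The comparison of maximizers takes place in
   the partial order of R[i], which is why [maximizer_gap] is stated for an
   arbitrary numDomainType. *)

Lemma maximizer_gap (R : numDomainType) (T : Type) (P : T -> Prop)
    (f g : T -> R) (x y : T) (e : R) :
  P x -> P y ->
  (forall w, P w -> f w <= f x) -> (forall w, P w -> g w <= g y) ->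
  (forall w, P w -> `|f w - g w| <= e) ->
  `|f x - f y| <= e *+ 2.
Proof.
move=> Px Py f_max g_max fg_close.
have fgap_ge0 : 0 <= f x - f y by rewrite subr_ge0 f_max.
have ggap_le0 : g x - g y <= 0 by rewrite subr_le0 g_max.
have fgap_split : f x - f y = (f x - g x) - (f y - g y) + (g x - g y) by ring.
have fgap_le : f x - f y <= (f x - g x) - (f y - g y) by rewrite fgap_split gerDl.
rewrite ger0_norm //; apply: (le_trans fgap_le).
rewrite -[leLHS]ger0_norm; last exact: le_trans fgap_ge0 fgap_le.
by apply: le_trans (ler_normB _ _) _; rewrite mulr2n lerD ?fg_close.
Qed.

Lemma sqr_sum_le (R : realFieldType) (n : nat) (a : 'I_n -> R) :
  (\sum_i a i) ^+ 2 <= n%:R * \sum_i a i ^+ 2.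
Proof.
case: n a => [|k] a; first by rewrite !big_ord0 expr0n mul0r.
set S := \sum_i a i; set m := S / k.+1%:R.
have var_eq : k.+1%:R * \sum_i (a i - m) ^+ 2 = k.+1%:R * \sum_i a i ^+ 2 - S ^+ 2.
  under eq_bigr do rewrite sqrrB.
  rewrite !big_split /= sumrN sumrMnl -mulr_suml sumr_const card_ord -/S /m.
  by field; rewrite addrC natr1 pnatr_eq0.
rewrite -subr_ge0 -var_eq mulr_ge0 ?ler0n ?sumr_ge0 // => i _; exact: sqr_ge0.
Qed.

Section ComplexModulus.
Variable R : realType.
Local Notation C := R[i].

Lemma cmodE (x : C) : `|x| = (cmod x)%:C%C.
Proof. by rewrite /cmod RRe_real // normr_real. Qed.

Lemma cmod_ge0 (x : C) : 0 <= cmod x.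
Proof. by have := normr_ge0 x; rewrite cmodE ler0c. Qed.

Lemma cmod_eq0 (x : C) : (cmod x == 0) = (x == 0).
Proof. by rewrite -[x == 0]normr_eq0 cmodE fmorph_eq0. Qed.

Lemma cmodM (x y : C) : cmod (x * y) = cmod x * cmod y.
Proof. by apply: complexI; rewrite rmorphM /= -!cmodE normrM. Qed.

Lemma cmod_conj (x : C) : cmod (Num.conj x) = cmod x.
Proof. by rewrite /cmod norm_conjC. Qed.

Lemma cmodR (c : R) : cmod c%:C%C = `|c|.
Proof. by rewrite /cmod normc_def /= expr0n /= addr0 sqrtr_sqr. Qed.

Lemma cmod_sum (I : finType) (F : I -> C) : cmod (\sum_i F i) <= \sum_i cmod (F i).
Proof.
rewrite -lecR rmorph_sum /= -cmodE.
under [X in _ <= X]eq_bigr do rewrite -cmodE.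
exact: ler_norm_sum.
Qed.

Lemma cmod_rootsK (K : nat) (z : C) : rootsK K z -> cmod z = 1.
Proof. by case=> k _ ->; rewrite /cmod normc_def /= cos2Dsin2 sqrtr1. Qed.

End ComplexModulus.

Section EuclideanNorm.
Variables (R : realType) (n : nat).
Local Notation C := R[i].

Lemma vnorm_ge0 (x : 'cV[C]_n) : 0 <= vnorm x.
Proof. exact: sqrtr_ge0. Qed.

Lemma vnorm_eq0 (x : 'cV[C]_n) : (vnorm x == 0) = (x == 0).
Proof.
apply/idP/eqP => [|->]; last first.
  by rewrite /vnorm big1 ?sqrtr0 // => i _; rewrite mxE /cmod normr0 expr0n.
have sqr_ge0 i : 0 <= cmod (x i 0) ^+ 2 by rewrite exprn_ge0 ?cmod_ge0.
rewrite /vnorm sqrtr_eq0 => sum_le0.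
have sum_eq0 : \sum_i cmod (x i 0) ^+ 2 = 0 by apply/le_anti; rewrite sum_le0 sumr_ge0.
apply/matrixP => i j; rewrite ord1 mxE; apply/eqP.
by rewrite -cmod_eq0 -sqrf_eq0 (psumr_eq0P _ sum_eq0).
Qed.

Lemma vnormZ (c : R) (x : 'cV[C]_n) : vnorm (c%:C%C *: x) = `|c| * vnorm x.
Proof.
rewrite /vnorm.
under eq_bigr do rewrite mxE cmodM cmodR exprMn real_normK ?num_real //.
by rewrite -mulr_sumr sqrtrM ?sqr_ge0 // sqrtr_sqr.
Qed.

Lemma vnorm_unimodular (z : 'cV[C]_n) :
  (forall i, cmod (z i 0) = 1) -> vnorm z = Num.sqrt n%:R.
Proof.
move=> z_unit; rewrite /vnorm; under eq_bigr do rewrite z_unit expr1n.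
by rewrite sumr_const card_ord.
Qed.

Lemma sum_cmod_le (x : 'cV[C]_n) :
  \sum_i cmod (x i 0) <= Num.sqrt n%:R * vnorm x.
Proof.
have sum_ge0 : 0 <= \sum_i cmod (x i 0) by rewrite sumr_ge0 // => i _; exact: cmod_ge0.
rewrite -(ger0_norm sum_ge0) -sqrtr_sqr /vnorm -sqrtrM ?ler0n //.
rewrite ler_sqrt ?sqr_sum_le // mulr_ge0 ?ler0n ?sumr_ge0 // => i _.
exact: sqr_ge0.
Qed.

Lemma cmod_mulmx_le_rowsum (D : 'M[C]_n) (x : 'cV[C]_n) (i : 'I_n) :
  vnorm x = 1 -> cmod ((D *m x) i 0) <= \sum_j cmod (D i j).
Proof.
move=> x_unit.
have x_le1 j : cmod (x j 0) <= 1.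
  have sum_eq1 : \sum_k cmod (x k 0) ^+ 2 = 1.
    by rewrite -(expr1n R 2) -x_unit sqr_sqrtr ?sumr_ge0 // => k _; exact: sqr_ge0.
  rewrite -(ler_pXn2r (_ : (0 < 2)%N)) ?nnegrE ?cmod_ge0 // expr1n -sum_eq1.
  by rewrite (bigD1 j) //= lerDl sumr_ge0 // => k _; exact: sqr_ge0.
rewrite mxE; apply: le_trans (cmod_sum _) _; apply: ler_sum => j _.
by rewrite cmodM ler_piMr ?cmod_ge0.
Qed.

Lemma specnorm_has_ubound (D : 'M[C]_n) :
  has_ubound [set vnorm (D *m x) | x in [set x : 'cV[C]_n | vnorm x = 1]].
Proof.
exists (Num.sqrt (\sum_i (\sum_j cmod (D i j)) ^+ 2)) => _ [x x_unit <-].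
rewrite ler_sqrt; last by rewrite sumr_ge0 // => i _; exact: sqr_ge0.
apply: ler_sum => i _; rewrite ler_pXn2r ?nnegrE ?cmod_ge0 ?cmod_mulmx_le_rowsum //.
by rewrite sumr_ge0 // => j _; exact: cmod_ge0.
Qed.

Lemma vnorm_mulmx_le (D : 'M[C]_n) (x : 'cV[C]_n) :
  vnorm (D *m x) <= specnorm D * vnorm x.
Proof.
have [->|x_neq0] := eqVneq x 0.
  have vnorm0 : vnorm (0 : 'cV[C]_n) = 0 by apply/eqP; rewrite vnorm_eq0.
  by rewrite mulmx0 vnorm0 mulr0.
have vx_gt0 : 0 < vnorm x by rewrite lt_def vnorm_eq0 x_neq0 vnorm_ge0.
set y := (vnorm x)^-1%:C%C *: x.
have y_unit : vnorm y = 1.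
  by rewrite vnormZ ger0_norm ?invr_ge0 ?vnorm_ge0 // mulVf // gt_eqF.
have : vnorm (D *m y) <= specnorm D.
  by rewrite /specnorm; apply: (ub_le_sup (specnorm_has_ubound D)); exists y.
rewrite /y -scalemxAr vnormZ ger0_norm; last by rewrite invr_ge0 vnorm_ge0.
by rewrite mulrC ler_pdivrMr.
Qed.

Lemma qform_sum (D : 'M[C]_n) (z : 'cV[C]_n) :
  qform D z = \sum_i Num.conj (z i 0) * (D *m z) i 0.
Proof. by rewrite /qform -mulmxA mxE; apply: eq_bigr => i _; rewrite !mxE. Qed.

Lemma qformB (A B : 'M[C]_n) (z : 'cV[C]_n) : qform (A - B) z = qform A z - qform B z.
Proof. by rewrite /qform mulmxBr mulmxBl !mxE. Qed.

Lemma cmod_qform_le (D : 'M[C]_n) (z : 'cV[C]_n) :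
  (forall i, cmod (z i 0) = 1) -> cmod (qform D z) <= n%:R * specnorm D.
Proof.
move=> z_unit.
have qform_le : cmod (qform D z) <= \sum_i cmod ((D *m z) i 0).
  rewrite qform_sum; apply: le_trans (cmod_sum _) _; apply: ler_sum => i _.
  by rewrite cmodM cmod_conj z_unit mul1r.
apply: le_trans qform_le (le_trans (sum_cmod_le _) _).
apply: le_trans (ler_wpM2l (sqrtr_ge0 _) (vnorm_mulmx_le D z)) _.
by rewrite (vnorm_unimodular z_unit) mulrCA -expr2 sqr_sqrtr ?ler0n // mulrC.
Qed.

End EuclideanNorm.

Theorem lemma10 (R : realType) (n K r : nat) (hK : (2 <= K)%N)
    (Qstar H : 'M[R[i]]_n) (U W : 'M[R[i]]_n) (s : 'rV[R]_n)
    (zstar zr : 'cV[R[i]]_n) :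
  psd Qstar ->
  is_svd (Qstar + H) U W s ->
  is_maximizer K Qstar zstar ->
  is_maximizer K (trunc_approx r U s) zr ->
  `| qform Qstar zstar - qform Qstar zr |
    <= ((2 * n%:R * specnorm (Qstar - trunc_approx r U s))%:C)%C.
Proof.
move=> _ _ [AKzstar zstar_max] [AKzr zr_max].
rewrite -mulrA mulr_natl rmorphMn /=.
apply: (maximizer_gap (P := @in_AKn R K n) (f := qform Qstar) (g := qform (trunc_approx r U s)))
  => // w AKw.
rewrite -qformB cmodE lecR; apply: cmod_qform_le => i.
exact: cmod_rootsK (AKw i).
Qed.
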